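(* Let $N\ge1$, $\beta$ a non-negative integer and $\gamma$ a constant. For every $j=1,\dots,N$, the operators $\tilde h^B_j$ and $(\tilde b^\dagger_j)^2$ map $\mathbb{C}[z_1^2,\dots,z_N^2]$ into itself.
   Context: Operators on functions of $z=(z_1,\dots,z_N)$: $s_{ij}$ swaps $z_i$ and $z_j$; $t_j$ replaces $z_j$ by $-z_j$. $D^B_j=\frac{\partial}{\partial z_j}+\beta\sum_{k\neq j}\left(\frac{1-s_{jk}}{z_j-z_k}+\frac{1-t_jt_ks_{jk}}{z_j+z_k}\right)+\gamma\frac{1-t_j}{z_j}$. Set $\tilde b^\dagger_j=\frac1{\sqrt2}\left(-D^B_j+2z_j\right)$ and $\tilde b_j=\frac1{\sqrt2}D^B_j$ (the conjugates of $\frac1{\sqrt2}(\mp D^B_j+z_j)$ by multiplication by $\prod_k e^{-z_k^2/2}$), and $\tilde h^B_j=\tilde b^\dagger_j\tilde b_j+\beta\sum_{k<j}\left(s_{jk}+t_jt_ks_{jk}\right)$. *)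

From HB Require Import structures.
From mathcomp Require Import all_boot all_order all_algebra.
From mathcomp Require Import mpoly.
From Stdlib Require Import ClassicalEpsilon.
Set Implicit Arguments. Unset Strict Implicit. Unset Printing Implicit Defensive.
Import Order.TTheory GRing.Theory Num.Theory.
Local Open Scope ring_scope.

Section Ops.
Variables (C : numClosedFieldType) (N : nat).
Local Notation P := {mpoly C[N]}.

Definition subst (f : 'I_N -> P) (p : P) : P := p \mPo [tuple f i | i < N].

Definition swp (j k : 'I_N) (p : P) : P := subst (fun i => if i == j then 'X_k else if i == k then 'X_j else 'X_i) p.

Definition tfl (j : 'I_N) (p : P) : P :=
  subst (fun i => if i == j then - 'X_i else 'X_i) p.

(* exact quotient q = p / d (a polynomial q with p = d * q; in all uses below
   such a q exists, since the divided differences of polynomials are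
   polynomials) *)
Definition divq (d p : P) : P := epsilon (inhabits 0) (fun q => p = d * q).

Definition DB (beta : nat) (gamma : C) (j : 'I_N) (p : P) : P :=
  mderiv j p
  + beta%:R *: (\sum_(k < N | k != j)
        (divq ('X_j - 'X_k) (p - swp j k p)
         + divq ('X_j + 'X_k) (p - tfl j (tfl k (swp j k p)))))
  + gamma *: divq 'X_j (p - tfl j p).

Definition bdag beta gamma (j : 'I_N) (p : P) : P :=
  (sqrtC 2)^-1 *: (- DB beta gamma j p + 2%:R *: ('X_j * p)).

Definition bann beta gamma (j : 'I_N) (p : P) : P :=
  (sqrtC 2)^-1 *: DB beta gamma j p.

Definition hB beta gamma (j : 'I_N) (p : P) : P :=
  bdag beta gamma j (bann beta gamma j p)
  + beta%:R *: (\sum_(k < N | (k < j)%N) (swp j k p + tfl j (tfl k (swp j k p)))).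

Definition in_even_poly (p : P) : Prop :=
  exists q : P, p = subst (fun i => 'X_i ^+ 2) q.

End Ops.

From Pilot Require Import Defs.
From HB Require Import structures.
From mathcomp Require Import all_boot all_order all_algebra.
From mathcomp Require Import mpoly.
From mathcomp Require Import ring.
From Stdlib Require Import ClassicalEpsilon.
Set Implicit Arguments. Unset Strict Implicit. Unset Printing Implicit Defensive.
Import Order.TTheory GRing.Theory Num.Theory.
Local Open Scope ring_scope.

(* Write [sq q] for q(z_1^2, ..., z_N^2), so that C[z_1^2, ..., z_N^2] is the
   image of [sq], and call p odd in z_j when p = z_j * sq q.  The reflections
   s_jk and t_j preserve even polynomials, while D^B_j exchanges even and
   odd-in-z_j polynomials: for the derivative this is the chain rule, and the
   divided differences are computed explicitly from q - s_jk q = (z_j - z_k) r,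
   which after squaring reads sq q - s_jk (sq q) = (z_j^2 - z_k^2) sq r.  As
   multiplication by z_j also exchanges the two classes, so do b^dagger_j and
   b_j, whence h^B_j and (b^dagger_j)^2 preserve even polynomials. *)

Section CompMpoly.
Context {R : comNzRingType} {n : nat}.
Implicit Types (p q d : {mpoly R[n]}).

Lemma mpoly_subalg_ind (P : {mpoly R[n]} -> Prop) :
  P 1 -> (forall i, P 'X_i) ->
  (forall c p, P p -> P (c *: p)) ->
  (forall p q, P p -> P q -> P (p + q)) ->
  (forall p q, P p -> P q -> P (p * q)) ->
  forall p, P p.
Proof.
move=> P1 PX PZ PD PM.
have PXn i k : P ('X_i ^+ k) by elim: k => [|k IHk]; rewrite ?expr0 // exprS; apply: PM.
elim/mpolyind => [|c m p _ _ Pp]; first by rewrite -(scale0r 1); apply: PZ.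
apply: PD => //; apply: PZ; rewrite mpolyXE_id.
by apply: (big_ind P) => // i _; apply: PXn.
Qed.

Lemma mderivXU (i j : 'I_n) : mderiv j ('X_i : {mpoly R[n]}) = (i == j)%:R.
Proof.
rewrite mderivX mnm1E; case: eqP => [->|_]; last by rewrite scale0r.
by rewrite -{1}[U_(j)%MM]add0m addmK mpolyX0 scale1r.
Qed.

Lemma mpolyXB_neq0 (i j : 'I_n) : i != j -> ('X_i - 'X_j : {mpoly R[n]}) != 0.
Proof.
move=> ij; apply/eqP => /(congr1 (mcoeff U_(i))).
by rewrite mcoeffB !mcoeffXU eqxx eq_sym (negbTE ij) subr0 mcoeff0 => /eqP; rewrite oner_eq0.
Qed.

Lemma mpolyXD_neq0 (i j : 'I_n) : i != j -> ('X_i + 'X_j : {mpoly R[n]}) != 0.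
Proof.
move=> ij; apply/eqP => /(congr1 (mcoeff U_(i))).
by rewrite mcoeffD !mcoeffXU eqxx eq_sym (negbTE ij) addr0 mcoeff0 => /eqP; rewrite oner_eq0.
Qed.

Lemma mpolyX_neq0 (i : 'I_n) : ('X_i : {mpoly R[n]}) != 0.
Proof.
apply/eqP => /(congr1 (mcoeff U_(i))).
by rewrite mcoeffXU eqxx mcoeff0 => /eqP; rewrite oner_eq0.
Qed.

Lemma comp_mpolyA k l p (lq : n.-tuple {mpoly R[k]}) (lr : k.-tuple {mpoly R[l]}) :
  p \mPo lq \mPo lr = p \mPo [tuple tnth lq i \mPo lr | i < n].
Proof.
elim/mpoly_subalg_ind: p => [|i|c p IHp|p q IHp IHq|p q IHp IHq].
- by rewrite !comp_mpoly1.
- by rewrite !comp_mpolyXU -!tnth_nth tnth_mktuple.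
- by rewrite !comp_mpolyZ IHp.
- by rewrite !comp_mpolyD IHp IHq.
- by rewrite !rmorphM /= IHp IHq.
Qed.

Lemma mderiv_comp_mpoly k p (lq : n.-tuple {mpoly R[k]}) (j : 'I_k) :
  mderiv j (p \mPo lq) = \sum_(i < n) (mderiv i p \mPo lq) * mderiv j (tnth lq i).
Proof.
elim/mpoly_subalg_ind: p => [|i|c p IHp|p q IHp IHq|p q IHp IHq].
- rewrite comp_mpoly1 -mpolyC1 mderivC big1 // => i _.
  by rewrite mderivC comp_mpoly0 mul0r.
- rewrite comp_mpolyXU -tnth_nth (bigD1 i) //= big1 => [|l /negbTE li].
    by rewrite mderivXU eqxx comp_mpoly1 mul1r addr0.
  by rewrite mderivXU eq_sym li comp_mpoly0 mul0r.
- rewrite comp_mpolyZ mderivZ IHp scaler_sumr; apply: eq_bigr => i _.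
  by rewrite mderivZ comp_mpolyZ scalerAl.
- rewrite comp_mpolyD mderivD IHp IHq -big_split; apply: eq_bigr => i _.
  by rewrite mderivD comp_mpolyD mulrDl.
- rewrite rmorphM mderivM IHp IHq mulr_suml mulr_sumr -big_split.
  apply: eq_bigr => i _; rewrite mderivM comp_mpolyD !rmorphM /=; ring.
Qed.

Lemma comp_mpoly_subr_dvd d p (lq : n.-tuple {mpoly R[n]}) :
  (forall i, exists r, 'X_i - tnth lq i = d * r) ->
  exists r, p - (p \mPo lq) = d * r.
Proof.
move=> dX; elim/mpoly_subalg_ind: p => [|i|c p [r e]|p q [r e] [s f]|p q [r e] [s f]].
- by exists 0; rewrite comp_mpoly1 subrr mulr0.
- by rewrite comp_mpolyXU -tnth_nth.
- by exists (c *: r); rewrite comp_mpolyZ -scalerBr e scalerAr.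
- by exists (r + s); rewrite comp_mpolyD mulrDr -e -f; ring.
- exists (p * s + r * (q \mPo lq)).
  by rewrite rmorphM /= mulrDr mulrCA -f mulrA -e; ring.
Qed.

End CompMpoly.

Section TypeBDunkl.
Context {C : numClosedFieldType} {N : nat}.
Local Notation P := {mpoly C[N]}.
Implicit Types (p q : P) (f g : 'I_N -> P) (j k : 'I_N).

HB.instance Definition _ f :=
  GRing.LRMorphism.copy (subst f) (comp_mpoly [tuple f i | i < N]).
HB.instance Definition _ j k := GRing.LRMorphism.copy (swp j k) (subst _).
HB.instance Definition _ j := GRing.LRMorphism.copy (tfl j) (subst _).

Lemma substX f i : subst f 'X_i = f i.
Proof. by rewrite /subst comp_mpolyXU -tnth_nth tnth_mktuple. Qed.

Lemma subst_comp f g p : subst f (subst g p) = subst (fun i => subst f (g i)) p.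
Proof.
rewrite /subst comp_mpolyA; congr comp_mpoly.
by apply: eq_mktuple => i; rewrite tnth_mktuple.
Qed.

Lemma eq_subst f g : f =1 g -> subst f =1 subst g.
Proof. by move=> fg p; rewrite /subst (eq_mktuple _ fg). Qed.

Lemma swpX_l j k : swp j k ('X_j : P) = 'X_k.
Proof. by rewrite /swp substX eqxx. Qed.

Lemma tflX_eq j : tfl j ('X_j : P) = - 'X_j.
Proof. by rewrite /tfl substX eqxx. Qed.

Lemma tflX_neq j k : j != k -> tfl j ('X_k : P) = 'X_k.
Proof. by rewrite /tfl substX eq_sym => /negbTE ->. Qed.

Local Notation sq := (subst (fun i : 'I_N => 'X_i ^+ 2)).

Lemma swp_sq j k q : swp j k (sq q) = sq (swp j k q).
Proof.
rewrite /swp !subst_comp; apply: eq_subst => i; rewrite rmorphXn /= substX.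
by case: ifP => _; [|case: ifP => _]; rewrite substX.
Qed.

Lemma tfl_sq j q : tfl j (sq q) = sq q.
Proof.
rewrite /tfl subst_comp; apply: eq_subst => i; rewrite rmorphXn /= substX.
by case: ifP => _; rewrite ?sqrrN.
Qed.

Lemma mderiv_sq j q : mderiv j (sq q) = 'X_j * sq (mderiv j q) *+ 2.
Proof.
rewrite /subst mderiv_comp_mpoly (bigD1 j) //= big1 => [|i ij].
  by rewrite tnth_mktuple expr2 mderivM mderivXU eqxx addr0 mulr1n; ring.
by rewrite tnth_mktuple expr2 mderivM mderivXU (negbTE ij) mulr0 mul0r addr0 mulr0.
Qed.

Lemma sq_subr_swp_dvd j k q :
  exists r, sq q - sq (swp j k q) = ('X_j ^+ 2 - 'X_k ^+ 2) * sq r.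
Proof.
have [r e] : exists r, q - swp j k q = ('X_j - 'X_k) * r.
  apply: comp_mpoly_subr_dvd => i; rewrite tnth_mktuple.
  case: eqP => [->|_]; first by exists 1; rewrite mulr1.
  case: eqP => [->|_]; first by exists (-1); rewrite mulrN1 opprB.
  by exists 0; rewrite subrr mulr0.
by exists r; rewrite -rmorphB e rmorphM rmorphB /= !substX.
Qed.

(* [Defs.divq]: the unqualified name is the division of [rat]. *)
Lemma mulKdivq (d q : P) : d != 0 -> Defs.divq d (d * q) = q.
Proof.
move=> d0; apply: (mulfI d0); symmetry.
exact: (epsilon_spec (inhabits 0) (fun r => d * q = d * r) (ex_intro _ q erefl)).
Qed.

Definition in_odd_poly j p := exists q, p = 'X_j * sq q.

Lemma in_even_poly0 : in_even_poly (0 : P).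
Proof. by exists 0; rewrite rmorph0. Qed.
Lemma in_even_polyD p q : in_even_poly p -> in_even_poly q -> in_even_poly (p + q).
Proof. by move=> [a ->] [b ->]; exists (a + b); rewrite rmorphD. Qed.
Lemma in_even_polyZ c p : in_even_poly p -> in_even_poly (c *: p).
Proof. by move=> [a ->]; exists (c *: a); rewrite linearZ. Qed.
Lemma in_even_polyN p : in_even_poly p -> in_even_poly (- p).
Proof. by move=> [a ->]; exists (- a); rewrite rmorphN. Qed.
Lemma in_even_poly_swp j k p : in_even_poly p -> in_even_poly (swp j k p).
Proof. by move=> [q ->]; exists (swp j k q); rewrite swp_sq. Qed.
Lemma in_even_poly_mulX j p : in_odd_poly j p -> in_even_poly ('X_j * p).
Proof. by move=> [a ->]; exists ('X_j * a); rewrite rmorphM /= substX mulrA. Qed.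

Lemma in_odd_poly0 j : in_odd_poly j 0.
Proof. by exists 0; rewrite rmorph0 mulr0. Qed.
Lemma in_odd_polyD j p q : in_odd_poly j p -> in_odd_poly j q -> in_odd_poly j (p + q).
Proof. by move=> [a ->] [b ->]; exists (a + b); rewrite rmorphD mulrDr. Qed.
Lemma in_odd_polyZ j c p : in_odd_poly j p -> in_odd_poly j (c *: p).
Proof. by move=> [a ->]; exists (c *: a); rewrite linearZ scalerAr. Qed.
Lemma in_odd_polyN j p : in_odd_poly j p -> in_odd_poly j (- p).
Proof. by move=> [a ->]; exists (- a); rewrite rmorphN mulrN. Qed.
Lemma in_odd_poly_mulX j p : in_even_poly p -> in_odd_poly j ('X_j * p).
Proof. by move=> [a ->]; exists a. Qed.

Lemma reflection_term_even j k p : j != k -> in_even_poly p ->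
  in_odd_poly j (Defs.divq ('X_j - 'X_k) (p - swp j k p)
                 + Defs.divq ('X_j + 'X_k) (p - tfl j (tfl k (swp j k p)))).
Proof.
move=> jk [q ->]; have [r e] := sq_subr_swp_dvd j k q.
have sqB : ('X_j ^+ 2 - 'X_k ^+ 2 : P) = ('X_j - 'X_k) * ('X_j + 'X_k) by ring.
rewrite swp_sq !tfl_sq e sqB -mulrA mulKdivq ?mpolyXB_neq0 //.
rewrite mulrCA mulKdivq ?mpolyXD_neq0 //.
by exists (r *+ 2); rewrite rmorphMn; ring.
Qed.

Lemma reflection_term_odd j k p : j != k -> in_odd_poly j p ->
  in_even_poly (Defs.divq ('X_j - 'X_k) (p - swp j k p)
                + Defs.divq ('X_j + 'X_k) (p - tfl j (tfl k (swp j k p)))).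
Proof.
move=> jk [g ->]; set G := sq g; set S := sq (swp j k g).
have swpG : swp j k ('X_j * G) = 'X_k * S by rewrite rmorphM /= swpX_l swp_sq.
have tflS : tfl j (tfl k ('X_k * S)) = - ('X_k * S).
  by rewrite !rmorphM /= !tfl_sq tflX_eq rmorphN /= tflX_neq // mulNr.
have [u hU] := sq_subr_swp_dvd j k g.
have [v hV] := sq_subr_swp_dvd j k ('X_j * g).
rewrite -/G -/S in hU.
rewrite !rmorphM /= swpX_l !substX -/G -/S in hV.
(* Multiplied by z_j + z_k (resp. z_j - z_k), both numerators become
   combinations of the left-hand sides of hU and hV. *)
have e1 : 'X_j * G - 'X_k * S = ('X_j - 'X_k) * (sq v + 'X_j * 'X_k * sq u).
  apply: (mulfI (mpolyXD_neq0 jk)).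
  transitivity ('X_j ^+ 2 * G - 'X_k ^+ 2 * S + 'X_j * 'X_k * (G - S)); first ring.
  by rewrite hU hV; ring.
have e2 : 'X_j * G - - ('X_k * S) = ('X_j + 'X_k) * (sq v - 'X_j * 'X_k * sq u).
  apply: (mulfI (mpolyXB_neq0 jk)).
  transitivity ('X_j ^+ 2 * G - 'X_k ^+ 2 * S - 'X_j * 'X_k * (G - S)); first ring.
  by rewrite hU hV; ring.
rewrite swpG tflS e1 e2 !mulKdivq ?mpolyXB_neq0 ?mpolyXD_neq0 //.
by exists (v *+ 2); rewrite rmorphMn; ring.
Qed.

Lemma DB_even beta gamma j p : in_even_poly p -> in_odd_poly j (DB beta gamma j p).
Proof.
move=> ev; rewrite /DB; apply: in_odd_polyD; first apply: in_odd_polyD.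
- by case: ev => q ->; exists (mderiv j q *+ 2); rewrite mderiv_sq rmorphMn mulrnAr.
- apply: in_odd_polyZ; apply: big_ind => [||k]; first exact: in_odd_poly0.
    exact: in_odd_polyD.
  by rewrite eq_sym => jk; apply: reflection_term_even.
- apply: in_odd_polyZ; case: ev => q ->.
  by rewrite tfl_sq subrr -(mulr0 'X_j) mulKdivq ?mpolyX_neq0 //; apply: in_odd_poly0.
Qed.

Lemma DB_odd beta gamma j p : in_odd_poly j p -> in_even_poly (DB beta gamma j p).
Proof.
move=> od; rewrite /DB; apply: in_even_polyD; first apply: in_even_polyD.
- case: od => g ->; exists (g + 'X_j * mderiv j g *+ 2).
  rewrite mderivM mderivXU eqxx mderiv_sq rmorphD rmorphMn rmorphM /= substX; ring.
- apply: in_even_polyZ; apply: big_ind => [||k]; first exact: in_even_poly0.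
    exact: in_even_polyD.
  by rewrite eq_sym => jk; apply: reflection_term_odd.
- apply: in_even_polyZ; case: od => g ->.
  rewrite rmorphM /= tflX_eq tfl_sq mulNr opprK -mulr2n -mulrnAr mulKdivq ?mpolyX_neq0 //.
  by exists (g *+ 2); rewrite rmorphMn.
Qed.

Lemma bann_even beta gamma j p :
  in_even_poly p -> in_odd_poly j (bann beta gamma j p).
Proof. by move=> ev; apply/in_odd_polyZ/DB_even. Qed.

Lemma bdag_even beta gamma j p :
  in_even_poly p -> in_odd_poly j (bdag beta gamma j p).
Proof.
move=> ev; apply/in_odd_polyZ/in_odd_polyD; first exact/in_odd_polyN/DB_even.
exact/in_odd_polyZ/in_odd_poly_mulX.
Qed.

Lemma bdag_odd beta gamma j p :
  in_odd_poly j p -> in_even_poly (bdag beta gamma j p).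
Proof.
move=> od; apply/in_even_polyZ/in_even_polyD; first exact/in_even_polyN/DB_odd.
exact/in_even_polyZ/in_even_poly_mulX.
Qed.

Lemma hB_even beta gamma j p : in_even_poly p -> in_even_poly (hB beta gamma j p).
Proof.
move=> ev; apply: in_even_polyD; first exact/bdag_odd/bann_even.
apply: in_even_polyZ; apply: big_ind => [||k _]; first exact: in_even_poly0.
  exact: in_even_polyD.
have [q e] := in_even_poly_swp j k ev.
by rewrite e !tfl_sq; apply: in_even_polyD; exists q.
Qed.

End TypeBDunkl.

Theorem lemma2p8 (C : numClosedFieldType) (N : nat) (hN : (1 <= N)%N)
  (beta : nat) (gamma : C) (j : 'I_N) (p : {mpoly C[N]}) :
  in_even_poly p ->
  in_even_poly (hB beta gamma j p) /\
  in_even_poly (bdag beta gamma j (bdag beta gamma j p)).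
Proof. by move=> ev; split; [apply: hB_even | apply/bdag_odd/bdag_even]. Qed.
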